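(* Let $\Omega\subset\mathbb{R}^{n+1}$ be a compact convex body with $C^1$ boundary. Fix $X_0\in\partial\Omega$, let $X\in\partial\Omega$ and $\bar X_0,\bar X_1\in\partial\Omega^+(X_0)$, and let $(\bar X_t)_{t\in[0,1]}$ be the $c$-segment with respect to $X_0$ from $\bar X_0$ to $\bar X_1$. Then for all $t\in[0,1]$, $$-c(X,\bar X_t)+c(X_0,\bar X_t)+c(X,\bar X_0)-c(X_0,\bar X_0)\le t\big(-c(X,\bar X_1)+c(X_0,\bar X_1)+c(X,\bar X_0)-c(X_0,\bar X_0)\big).$$
   Context: $c(X,Y)=\frac{|X-Y|^2}{2}$. $\mathcal{N}_\Omega$ is the outward unit normal; $\partial\Omega^+(X_0):=\{X\in\partial\Omega\mid\langle\mathcal{N}_\Omega(X),\mathcal{N}_\Omega(X_0)\rangle>0\}$. Let $P_{X_0}$ be the orthogonal projection of $\mathbb{R}^{n+1}$ onto the tangent hyperplane $\Pi_{X_0}$ to $\partial\Omega$ at $X_0$; $P_{X_0}$ is injective on $\partial\Omega^+(X_0)$ and $\Omega_{X_0}:=P_{X_0}(\partial\Omega^+(X_0))$ is convex. The $c$-segment with respect to $X_0$ from $\bar X_0$ to $\bar X_1$ is the curve $t\mapsto\bar X_t$, where $\bar X_t$ is the unique point of $\partial\Omega^+(X_0)$ with $P_{X_0}(\bar X_t)=(1-t)P_{X_0}(\bar X_0)+tP_{X_0}(\bar X_1)$. *)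

From HB Require Import structures.
From mathcomp Require Import all_boot all_order all_algebra.
From mathcomp Require Import all_classical all_reals all_analysis.
Set Implicit Arguments. Unset Strict Implicit. Unset Printing Implicit Defensive.
Import Order.TTheory GRing.Theory Num.Theory.
Import numFieldNormedType.Exports.
Local Open Scope classical_set_scope.
Local Open Scope ring_scope.

Section Defs.
Variables (R : realType) (n : nat).
Notation V := 'rV[R]_(n.+1).

Definition dotp (u v : V) : R := \sum_(i < n.+1) u ord0 i * v ord0 i.

Definition cost (X Y : V) : R := dotp (X - Y) (X - Y) / 2.

Definition convex_setV (A : set V) : Prop :=
  forall x y t, A x -> A y -> 0 <= t <= 1 -> A ((1 - t) *: x + t *: y).

Definition convex_body (A : set V) : Prop :=
  compact A /\ convex_setV A /\ interior A !=set0.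

Definition bdry (A : set V) : set V := closure A `\` interior A.

(* C^1 boundary: A is the sublevel set {rho <= 0} of a C^1 function rho whose
   differential does not vanish on {rho = 0} (global defining function). *)
Definition C1_boundary (A : set V) : Prop :=
  exists rho : V -> R,
    (forall x, differentiable rho x) /\
    (forall h : V, continuous (fun x => 'd rho x h)) /\
    A = [set x | rho x <= 0] /\
    (forall x, rho x = 0 -> exists h : V, 'd rho x h != 0).

(* nu is the outward unit normal of the convex body A at X (unit normal of a
   supporting hyperplane at X, pointing away from A). *)
Definition outward_unit_normal (A : set V) (X nu : V) : Prop :=
  dotp nu nu = 1 /\ forall Y, A Y -> dotp nu (Y - X) <= 0.

Definition bdry_plus (A : set V) (N : V -> V) (X0 : V) : set V :=
  [set X | bdry A X /\ 0 < dotp (N X) (N X0)].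

Definition proj_tan (N : V -> V) (X0 Y : V) : V :=
  Y - (dotp (Y - X0) (N X0)) *: N X0.

(* Xb is (a parametrization of) the c-segment wrt X0 from Xb0 to Xb1:
   for every t in [0,1], Xb t is a point of dOmega^+(X0) whose projection is
   (1-t) P(Xb0) + t P(Xb1) (such a point is unique by injectivity of P). *)
Definition c_segment (A : set V) (N : V -> V) (X0 Xb0 Xb1 : V) (Xb : R -> V)
  : Prop :=
  forall t, 0 <= t <= 1 ->
    bdry_plus A N X0 (Xb t) /\
    proj_tan N X0 (Xb t) =
      (1 - t) *: proj_tan N X0 Xb0 + t *: proj_tan N X0 Xb1.

End Defs.

From HB Require Import structures.
From mathcomp Require Import all_boot all_order all_algebra.
From mathcomp Require Import all_classical all_reals all_analysis.
From mathcomp Require Import ring lra.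
Import Order.TTheory GRing.Theory Num.Theory.
Import numFieldNormedType.Exports.
Local Open Scope classical_set_scope.
Local Open Scope ring_scope.

(* Y |-> c(X0, Y) - c(X, Y) is affine, so the defect of the inequality is
   <X - X0, X_t - ((1-t) X_0 + t X_1)>.  Since X_t and the convex combination
   have the same tangential projection, their difference is s N(X0).  The
   supporting hyperplane at X_t (whose normal makes an acute angle with N(X0))
   forces s >= 0, and the one at X0 gives <X - X0, N(X0)> <= 0. *)

Section ProjectedSegments.
Set Implicit Arguments. Unset Strict Implicit.
Variables (R : realType) (n : nat).
Implicit Types (a t : R) (u v w : 'rV[R]_(n.+1)).

Lemma dotpC u v : dotp u v = dotp v u.
Proof. by apply: eq_bigr => i _; rewrite mulrC. Qed.

Lemma dotpDl u v w : dotp (u + v) w = dotp u w + dotp v w.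
Proof. by rewrite /dotp -big_split; apply: eq_bigr => i _; rewrite mxE mulrDl. Qed.

Lemma dotpZl a u w : dotp (a *: u) w = a * dotp u w.
Proof. by rewrite /dotp mulr_sumr; apply: eq_bigr => i _; rewrite mxE mulrA. Qed.

Lemma dotpNl u w : dotp (- u) w = - dotp u w.
Proof. by rewrite -scaleN1r dotpZl mulN1r. Qed.

Lemma dotpBl u v w : dotp (u - v) w = dotp u w - dotp v w.
Proof. by rewrite dotpDl dotpNl. Qed.

Lemma dotpDr u v w : dotp w (u + v) = dotp w u + dotp w v.
Proof. by rewrite dotpC dotpDl !(dotpC w). Qed.

Lemma dotpZr a u w : dotp w (a *: u) = a * dotp w u.
Proof. by rewrite dotpC dotpZl dotpC. Qed.

Lemma dotpBr u v w : dotp w (u - v) = dotp w u - dotp w v.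
Proof. by rewrite dotpC dotpBl !(dotpC w). Qed.

Lemma cost_diffE (X X0 Y : 'rV[R]_(n.+1)) :
  cost X0 Y - cost X Y = (dotp X0 X0 - dotp X X) / 2 + dotp (X - X0) Y.
Proof. rewrite /cost !dotpBl !dotpBr (dotpC Y X) (dotpC Y X0); lra. Qed.

Lemma cost_diff_convex_defect (X X0 Y0 Y1 Yt : 'rV[R]_(n.+1)) t :
  cost X0 Yt - cost X Yt - (cost X0 Y0 - cost X Y0)
    - t * (cost X0 Y1 - cost X Y1 - (cost X0 Y0 - cost X Y0))
  = dotp (X - X0) (Yt - ((1 - t) *: Y0 + t *: Y1)).
Proof. rewrite !cost_diffE dotpBr dotpDr !dotpZr; lra. Qed.

Implicit Types (A : set 'rV[R]_(n.+1)) (N : 'rV[R]_(n.+1) -> 'rV[R]_(n.+1)).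

Lemma compact_bdry_sub A : compact A -> bdry A `<=` A.
Proof. by move=> cA x [clx _]; exact: compact_closed (@norm_hausdorff _ _) cA _ clx. Qed.

Lemma proj_tan_combination N (X0 Y0 Y1 Yt : 'rV[R]_(n.+1)) t :
  proj_tan N X0 Yt = (1 - t) *: proj_tan N X0 Y0 + t *: proj_tan N X0 Y1 ->
  Yt - ((1 - t) *: Y0 + t *: Y1)
  = (dotp (Yt - X0) (N X0) - (1 - t) * dotp (Y0 - X0) (N X0)
       - t * dotp (Y1 - X0) (N X0)) *: N X0.
Proof.
(* Name the heights first, so that substituting [Yt] leaves the right side alone. *)
rewrite /proj_tan; set a := dotp (Yt - X0) _; set a0 := dotp (Y0 - X0) _.
set a1 := dotp (Y1 - X0) _ => /(canRL (subrK _)) ->.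
by apply/rowP => i; rewrite !mxE; ring.
Qed.

Lemma outward_normal_offset_ge0 A (X nu m Z : 'rV[R]_(n.+1)) s :
  outward_unit_normal A X nu -> A Z -> X - Z = s *: m -> 0 < dotp nu m ->
  0 <= s.
Proof.
move=> [_ supp] AZ XZ num.
have : dotp nu (Z - X) <= 0 by exact: supp.
rewrite -opprB XZ -scaleNr dotpZr mulNr oppr_le0.
by rewrite pmulr_lge0.
Qed.

End ProjectedSegments.

Theorem proposition3p4 (R : realType) (n : nat) (Omega : set 'rV[R]_(n.+1))
  (N : 'rV[R]_(n.+1) -> 'rV[R]_(n.+1))
  (hbody : convex_body Omega) (hC1 : C1_boundary Omega)
  (hN : forall X, bdry Omega X -> outward_unit_normal Omega X (N X))
  (X0 X Xb0 Xb1 : 'rV[R]_(n.+1)) (Xb : R -> 'rV[R]_(n.+1))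
  (hX0 : bdry Omega X0) (hX : bdry Omega X)
  (hXb0 : bdry_plus Omega N X0 Xb0) (hXb1 : bdry_plus Omega N X0 Xb1)
  (hseg : c_segment Omega N X0 Xb0 Xb1 Xb) :
  forall t : R, 0 <= t <= 1 ->
    - cost X (Xb t) + cost X0 (Xb t) + cost X Xb0 - cost X0 Xb0
    <= t * (- cost X Xb1 + cost X0 Xb1 + cost X Xb0 - cost X0 Xb0).
Proof.
move=> t t01.
have [compactO [convexO _]] := hbody.
have bdry_sub := compact_bdry_sub compactO.
have [[bdry_t acute_t] proj_t] := hseg t t01.
have := proj_tan_combination proj_t; set s := (_ - _ - _) => offset.
have s_ge0 : 0 <= s.
  apply: outward_normal_offset_ge0 (hN _ bdry_t) _ offset acute_t.
  by apply: convexO => //; [case: hXb0 | case: hXb1] => /bdry_sub.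
have normal_X : dotp (N X0) (X - X0) <= 0.
  by case: (hN _ hX0) => _; apply; exact: bdry_sub.
have := mulr_ge0_le0 s_ge0 normal_X.
rewrite dotpC -dotpZr -offset -cost_diff_convex_defect.
lra.
Qed.
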